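(* In $\mathbb{R}^2\otimes\mathbb{R}^2\otimes\mathbb{R}^2$ with standard orthonormal basis $e_1,e_2$ of $\mathbb{R}^2$, for $t\in\mathbb{R}$ let $f_t=e_2\otimes e_1\otimes e_1+e_1\otimes e_2\otimes e_1+e_1\otimes e_1\otimes e_2+t\,e_2\otimes e_2\otimes e_2$. Then (1) $\|f_t\|_\sigma=|t|$ if $t\ge2$ or $t\le-1$, and $\|f_t\|_\sigma=\frac{2}{\sqrt{3-t}}$ if $-1\le t\le2$; (2) $\|f_t\|_\star=3-t$ if $t\le\frac13$, and $\|f_t\|_\star=\frac{(1+t)^{3/2}}{\sqrt t}$ if $t\ge\frac13$.
   Context: The tensor space carries the inner product induced from the standard one, with euclidean norm $\|\cdot\|_2$. A simple tensor is one of the form $v_1\otimes v_2\otimes v_3$. The spectral norm is $\|T\|_\sigma=\max\{|\langle T,v\rangle|: v \text{ simple},\ \|v\|_2=1\}$. The nuclear norm $\|T\|_\star$ is the minimum of $\sum_{i=1}^r\|v_i\|_2$ over all expressions $T=v_1+\cdots+v_r$ with $v_i$ simple tensors. *)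

From Stdlib Require Import Reals List.
Open Scope R_scope.

(* Vectors of R^2: pairs (x1, x2); index false = e1, true = e2. *)
Definition vec2 := (R * R)%type.
Definition comp (v : vec2) (b : bool) : R := if b then snd v else fst v.
Definition e1 : vec2 := (1, 0).
Definition e2 : vec2 := (0, 1).

(* Tensors of R^2 (x) R^2 (x) R^2, as coefficient arrays in the standard basis. *)
Definition tensor := bool -> bool -> bool -> R.

Definition tsum (f : tensor) : R :=
  f false false false + f false false true + f false true false + f false true true +
  f true false false + f true false true + f true true false + f true true true.

Definition tinner (T U : tensor) : R := tsum (fun i j k => T i j k * U i j k).
Definition tnorm (T : tensor) : R := sqrt (tinner T T).

Definition tadd (T U : tensor) : tensor := fun i j k => T i j k + U i j k.
Definition tscale (c : R) (T : tensor) : tensor := fun i j k => c * T i j k.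
Definition tzero : tensor := fun _ _ _ => 0.

Definition simple3 (v1 v2 v3 : vec2) : tensor :=
  fun i j k => comp v1 i * comp v2 j * comp v3 k.

Definition is_simple (T : tensor) : Prop :=
  exists v1 v2 v3 : vec2, T = simple3 v1 v2 v3.

Definition is_max (P : R -> Prop) (m : R) : Prop := P m /\ forall x, P x -> x <= m.
Definition is_min (P : R -> Prop) (m : R) : Prop := P m /\ forall x, P x -> m <= x.

Definition spectral_values (T : tensor) (x : R) : Prop :=
  exists v : tensor, is_simple v /\ tnorm v = 1 /\ x = Rabs (tinner T v).
Definition is_spectral_norm (T : tensor) (s : R) : Prop := is_max (spectral_values T) s.

Definition tsum_list (l : list tensor) : tensor := fold_right tadd tzero l.
Definition nuclear_values (T : tensor) (x : R) : Prop :=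
  exists l : list tensor, Forall is_simple l /\ T = tsum_list l /\
    x = fold_right Rplus 0 (map tnorm l).
Definition is_nuclear_norm (T : tensor) (s : R) : Prop := is_min (nuclear_values T) s.

Definition f_t (t : R) : tensor :=
  tadd (simple3 e2 e1 e1) (tadd (simple3 e1 e2 e1)
    (tadd (simple3 e1 e1 e2) (tscale t (simple3 e2 e2 e2)))).

From Stdlib Require Import Reals List Lra Psatz FunctionalExtensionality.
Open Scope R_scope.

(* Writing [f_s(a,b,c) = <a, w(b,c)>], Cauchy-Schwarz reduces the bound
   [f_s(a,b,c)^2 <= M^2 |a|^2 |b|^2 |c|^2] to [|w(b,c)|^2 <= M^2 |b|^2 |c|^2],
   which for fixed [c] says that a 2x2 quadratic form in [b] is positive
   semidefinite; for [M = |s|] (when [s >= 2] or [s <= -1]) and for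
   [M = 2/sqrt(3-s)] (when [-1 <= s <= 2]) this holds, and the bound is attained
   at a symmetric tensor [x (x) x (x) x].  The nuclear norm is bounded above by
   explicit symmetric decompositions (three terms at 120 degrees for [t <= 1/3],
   two terms for [t >= 1/3]) and below by duality,
   [<f_s, f_t> = 3 + s t <= ||f_s||_sigma ||f_t||_*], with [s = -1], resp.
   [s = 2 - 1/t]. *)

Definition sqnorm2 (a : vec2) : R := fst a * fst a + snd a * snd a.

Definition f_form (s : R) (a b c : vec2) : R :=
  snd a * fst b * fst c + fst a * snd b * fst c + fst a * fst b * snd c
  + s * snd a * snd b * snd c.

Lemma sqnorm2_ge0 (a : vec2) : 0 <= sqnorm2 a.
Proof. unfold sqnorm2; nra. Qed.

Lemma tinner_f_t_simple3 s a b c : tinner (f_t s) (simple3 a b c) = f_form s a b c.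
Proof.
  destruct a, b, c.
  unfold tinner, tsum, f_t, tadd, tscale, simple3, comp, e1, e2, f_form; simpl; ring.
Qed.

Lemma tnorm_simple3 a b c : tnorm (simple3 a b c) = sqrt (sqnorm2 a * sqnorm2 b * sqnorm2 c).
Proof.
  unfold tnorm; f_equal; destruct a, b, c.
  unfold tinner, tsum, simple3, comp, sqnorm2; simpl; ring.
Qed.

Lemma tinner_f_t_f_t s t : tinner (f_t s) (f_t t) = 3 + s * t.
Proof. unfold tinner, tsum, f_t, tadd, tscale, simple3, comp, e1, e2; simpl; ring. Qed.

Lemma tinner_tadd_r g U V : tinner g (tadd U V) = tinner g U + tinner g V.
Proof. unfold tinner, tsum, tadd; ring. Qed.

Lemma tinner_tzero_r g : tinner g tzero = 0.
Proof. unfold tinner, tsum, tzero; ring. Qed.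

Lemma tensor_ext (T U : tensor) : (forall i j k, T i j k = U i j k) -> T = U.
Proof.
  intros H; do 3 (apply functional_extensionality; intro); apply H.
Qed.

Lemma is_spectral_norm_intro T m v :
  is_simple v -> tnorm v = 1 -> Rabs (tinner T v) = m ->
  (forall u, is_simple u -> Rabs (tinner T u) <= m * tnorm u) ->
  is_spectral_norm T m.
Proof.
  intros Hv Hn Hm Hub; split.
  - exists v; auto.
  - intros x [u [Hu [Hun ->]]].
    specialize (Hub u Hu); rewrite Hun in Hub; lra.
Qed.

Lemma tinner_tsum_list_le g C l :
  (forall v, is_simple v -> tinner g v <= C * tnorm v) -> Forall is_simple l ->
  tinner g (tsum_list l) <= C * fold_right Rplus 0 (map tnorm l).
Proof.
  intros Hg Hl; induction Hl as [|v l Hv _ IH]; simpl.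
  - rewrite tinner_tzero_r; lra.
  - rewrite tinner_tadd_r; specialize (Hg v Hv); lra.
Qed.

Lemma is_nuclear_norm_intro T m l g C :
  Forall is_simple l -> T = tsum_list l -> fold_right Rplus 0 (map tnorm l) = m ->
  0 < C -> (forall v, is_simple v -> tinner g v <= C * tnorm v) ->
  C * m <= tinner g T -> is_nuclear_norm T m.
Proof.
  intros Hl HT Hm HC Hg Hdual; split.
  - exists l; auto.
  - intros x [k [Hk [HTk ->]]].
    pose proof (tinner_tsum_list_le g C k Hg Hk) as B; rewrite <- HTk in B.
    apply (Rmult_le_reg_l C); lra.
Qed.

Lemma quad_form2_ge0 p q r x y :
  0 <= p -> 0 <= r -> q * q <= p * r -> 0 <= p * x * x + 2 * q * x * y + r * y * y.
Proof.
  intros Hp Hr Hq; destruct (Req_dec p 0) as [->|Hp0].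
  - assert (q = 0) as -> by nra; nra.
  - apply (Rmult_le_reg_l p); [lra|].
    assert (E : p * (p * x * x + 2 * q * x * y + r * y * y)
                = (p * x + q * y) ^ 2 + (p * r - q * q) * (y * y)) by ring.
    rewrite E, Rmult_0_r; pose proof (pow2_ge_0 (p * x + q * y)); nra.
Qed.

(* For fixed [c = (z1, z2)] the last condition is the determinant condition making
   [M2 |b|^2 |c|^2 - |w(b,c)|^2] a positive semidefinite quadratic form in [b]. *)
Definition slice_criterion (s M2 : R) : Prop :=
  1 <= M2 /\ s * s <= M2 /\ forall z1 z2,
  ((1 + s) * z1 * z2) * ((1 + s) * z1 * z2)
    <= ((M2 - 1) * (z1 * z1 + z2 * z2)) * ((M2 - 1) * (z1 * z1) + (M2 - s * s) * (z2 * z2)).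

Lemma f_form_sq_le s M2 a b c : slice_criterion s M2 ->
  f_form s a b c * f_form s a b c <= M2 * (sqnorm2 a * sqnorm2 b * sqnorm2 c).
Proof.
  destruct a as [x1 x2], b as [y1 y2], c as [z1 z2]; unfold f_form, sqnorm2; simpl.
  intros [H1 [Hs Hdet]].
  set (w1 := y2 * z1 + y1 * z2); set (w2 := y1 * z1 + s * y2 * z2).
  assert (Hw : w1 * w1 + w2 * w2 <= M2 * (y1 * y1 + y2 * y2) * (z1 * z1 + z2 * z2)).
  { pose proof (quad_form2_ge0 ((M2 - 1) * (z1 * z1 + z2 * z2)) (- (1 + s) * z1 * z2)
      ((M2 - 1) * (z1 * z1) + (M2 - s * s) * (z2 * z2)) y1 y2) as P.
    specialize (Hdet z1 z2).
    assert (0 <= (M2 - 1) * (z1 * z1 + z2 * z2)) by (apply Rmult_le_pos; nra).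
    assert (0 <= (M2 - 1) * (z1 * z1) + (M2 - s * s) * (z2 * z2)) by nra.
    unfold w1, w2; nra. }
  assert (E : x2 * y1 * z1 + x1 * y2 * z1 + x1 * y1 * z2 + s * x2 * y2 * z2
              = x1 * w1 + x2 * w2) by (unfold w1, w2; ring).
  rewrite E.
  assert (CS : (x1 * w1 + x2 * w2) * (x1 * w1 + x2 * w2)
            <= (x1 * x1 + x2 * x2) * (w1 * w1 + w2 * w2)).
  { pose proof (pow2_ge_0 (x1 * w2 - x2 * w1)); nra. }
  assert (0 <= x1 * x1 + x2 * x2) by nra.
  pose proof (Rmult_le_compat_l _ _ _ H Hw); lra.
Qed.

Lemma slice_criterion_outer s : 2 <= s \/ s <= -1 -> slice_criterion s (s * s).
Proof.
  intros Hs; split; [destruct Hs; nra | split; [lra |]]; intros z1 z2.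
  assert (0 <= s * (s - 2)) by (destruct Hs; nra).
  assert (E : ((s * s - 1) * (z1 * z1 + z2 * z2)) * ((s * s - 1) * (z1 * z1) + (s * s - s * s) * (z2 * z2))
              - ((1 + s) * z1 * z2) * ((1 + s) * z1 * z2)
            = ((s * s - 1) * (z1 * z1)) ^ 2 + ((1 + s) * z1 * z2) ^ 2 * (s * (s - 2))) by ring.
  pose proof (pow2_ge_0 ((s * s - 1) * (z1 * z1))).
  pose proof (Rmult_le_pos _ _ (pow2_ge_0 ((1 + s) * z1 * z2)) H).
  lra.
Qed.

Lemma slice_criterion_inner s : -1 <= s <= 2 -> slice_criterion s (4 / (3 - s)).
Proof.
  intros Hs; assert (H3 : 0 < 3 - s) by lra.
  assert (HM : 4 / (3 - s) * (3 - s) = 4) by (field; lra).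
  split; [| split].
  - apply (Rmult_le_reg_r (3 - s)); [lra|]; rewrite HM; lra.
  - apply (Rmult_le_reg_r (3 - s)); [lra|]; rewrite HM.
    assert (0 <= (s + 1) * ((s - 2) * (s - 2))) by (apply Rmult_le_pos; nra); nra.
  - intros z1 z2.
    assert (E : ((4 / (3 - s) - 1) * (z1 * z1 + z2 * z2))
                  * ((4 / (3 - s) - 1) * (z1 * z1) + (4 / (3 - s) - s * s) * (z2 * z2))
                - ((1 + s) * z1 * z2) * ((1 + s) * z1 * z2)
              = ((1 + s) * (z1 * z1 + (s - 2) * (z2 * z2)) / (3 - s)) ^ 2) by (field; lra).
    pose proof (pow2_ge_0 ((1 + s) * (z1 * z1 + (s - 2) * (z2 * z2)) / (3 - s))); lra.
Qed.

Lemma f_t_spectral_le s M : 0 <= M -> slice_criterion s (M * M) ->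
  forall v, is_simple v -> Rabs (tinner (f_t s) v) <= M * tnorm v.
Proof.
  intros HM Hc v [a [b [c ->]]]; rewrite tinner_f_t_simple3, tnorm_simple3.
  set (P := sqnorm2 a * sqnorm2 b * sqnorm2 c).
  assert (HP : 0 <= P) by (unfold P; pose proof (sqnorm2_ge0 a);
    pose proof (sqnorm2_ge0 b); pose proof (sqnorm2_ge0 c); repeat apply Rmult_le_pos; auto).
  pose proof (f_form_sq_le s (M * M) a b c Hc) as B; fold P in B.
  rewrite <- (Rabs_pos_eq (M * sqrt P)) by (apply Rmult_le_pos; [lra | apply sqrt_pos]).
  apply Rsqr_le_abs_0; unfold Rsqr.
  replace (M * sqrt P * (M * sqrt P)) with (M * M * (sqrt P * sqrt P)) by ring.
  rewrite sqrt_sqrt; lra.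
Qed.

Lemma f_t_spectral_le_real s M : 0 <= M -> slice_criterion s (M * M) ->
  forall v, is_simple v -> tinner (f_t s) v <= M * tnorm v.
Proof.
  intros HM Hc v Hv; pose proof (f_t_spectral_le s M HM Hc v Hv).
  pose proof (Rle_abs (tinner (f_t s) v)); lra.
Qed.

Definition vscale (l : R) (u : vec2) : vec2 := (l * fst u, l * snd u).

Definition sym3 (l : R) (u : vec2) : tensor := simple3 (vscale l u) u u.

Lemma sym3_simple l u : is_simple (sym3 l u).
Proof. exists (vscale l u), u, u; reflexivity. Qed.

Lemma tnorm_sym3 l u : sqnorm2 u = 1 -> 0 <= l -> tnorm (sym3 l u) = l.
Proof.
  intros Hu Hl; unfold sym3; rewrite tnorm_simple3.
  replace (sqnorm2 (vscale l u)) with (l * l * sqnorm2 u) by (unfold sqnorm2, vscale; simpl; ring).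
  rewrite Hu, !Rmult_1_r; apply sqrt_square; auto.
Qed.

Lemma Rpower_3_2 x : 0 < x -> Rpower x (3 / 2) = x * sqrt x.
Proof.
  intros Hx; replace (3 / 2) with (1 + / 2) by field.
  rewrite Rpower_plus, Rpower_1, Rpower_sqrt; auto.
Qed.

Lemma spectral_norm_f_t_outer t : 2 <= t \/ t <= -1 -> is_spectral_norm (f_t t) (Rabs t).
Proof.
  intros Ht; apply (is_spectral_norm_intro _ _ (simple3 e2 e2 e2)).
  - exists e2, e2, e2; reflexivity.
  - rewrite tnorm_simple3; unfold sqnorm2, e2; simpl.
    replace ((0 * 0 + 1 * 1) * (0 * 0 + 1 * 1) * (0 * 0 + 1 * 1)) with 1 by ring; apply sqrt_1.
  - rewrite tinner_f_t_simple3; unfold f_form, e2; simpl; f_equal; ring.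
  - apply f_t_spectral_le; [apply Rabs_pos |].
    rewrite <- Rabs_mult, Rabs_pos_eq by nra; apply slice_criterion_outer; auto.
Qed.

Lemma spectral_norm_f_t_inner t : -1 <= t <= 2 -> is_spectral_norm (f_t t) (2 / sqrt (3 - t)).
Proof.
  intros Ht.
  set (u := sqrt (3 - t)); assert (Hu : 0 < u) by (apply sqrt_lt_R0; lra).
  assert (Huu : u * u = 3 - t) by (apply sqrt_sqrt; lra).
  set (g := sqrt (2 - t)); assert (Hgg : g * g = 2 - t) by (apply sqrt_sqrt; lra).
  set (x := (g / u, 1 / u)).
  apply (is_spectral_norm_intro _ _ (simple3 x x x)).
  - exists x, x, x; reflexivity.
  - rewrite tnorm_simple3; unfold sqnorm2, x; simpl.
    replace (g / u * (g / u) + 1 / u * (1 / u)) with ((g * g + 1) / (u * u)) by (field; lra).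
    rewrite Hgg, Huu; replace ((2 - t + 1) / (3 - t)) with 1 by (field; lra).
    rewrite !Rmult_1_l; apply sqrt_1.
  - rewrite tinner_f_t_simple3; unfold f_form, x; simpl.
    replace (1 / u * (g / u) * (g / u) + g / u * (1 / u) * (g / u) + g / u * (g / u) * (1 / u)
             + t * (1 / u) * (1 / u) * (1 / u)) with ((3 * (g * g) + t) / (u * (u * u)))
      by (field; lra).
    rewrite Hgg, Huu; replace ((3 * (2 - t) + t) / (u * (3 - t))) with (2 / u) by (field; lra).
    apply Rabs_pos_eq, Rlt_le, Rdiv_lt_0_compat; lra.
  - apply f_t_spectral_le; [apply Rlt_le, Rdiv_lt_0_compat; lra |].
    replace (2 / u * (2 / u)) with (4 / (3 - t)) by (rewrite <- Huu; field; lra).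
    apply slice_criterion_inner; auto.
Qed.

Lemma nuclear_norm_f_t_low t : t <= 1 / 3 -> is_nuclear_norm (f_t t) (3 - t).
Proof.
  intros Ht.
  set (h := sqrt 3 / 2).
  assert (Hh : h * h = 3 / 4) by (unfold h; replace (sqrt 3 / 2 * (sqrt 3 / 2))
    with (sqrt 3 * sqrt 3 / 4) by field; rewrite sqrt_sqrt; lra).
  set (u1 := (h, 1 / 2)); set (u2 := (- h, 1 / 2)); set (u3 := (0, -1)).
  assert (N1 : sqnorm2 u1 = 1) by (unfold sqnorm2, u1; simpl; lra).
  assert (N2 : sqnorm2 u2 = 1) by (unfold sqnorm2, u2; simpl; lra).
  assert (N3 : sqnorm2 u3 = 1) by (unfold sqnorm2, u3; simpl; lra).
  apply (is_nuclear_norm_intro _ _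
    (sym3 (4 / 3) u1 :: sym3 (4 / 3) u2 :: sym3 (1 / 3 - t) u3 :: nil) (f_t (-1)) 1).
  - repeat constructor; apply sym3_simple.
  - apply tensor_ext; intros [|] [|] [|];
      unfold tsum_list, f_t, tadd, tscale, tzero, sym3, simple3, vscale, comp, e1, e2, u1, u2, u3;
      simpl; nra.
  - simpl; rewrite !tnorm_sym3 by (auto; lra); lra.
  - lra.
  - apply f_t_spectral_le_real; [lra |].
    replace (1 * 1) with ((-1) * (-1)) by ring; apply slice_criterion_outer; lra.
  - rewrite tinner_f_t_f_t; lra.
Qed.

(* The decomposition uses [w = (+-1, sqrt t)/sqrt(1+t)]; the dual certificate is
   [f_s] with [s = 2 - 1/t], whose spectral norm is [2 sqrt(t/(1+t))]. *)
Lemma nuclear_norm_f_t_high t : 1 / 3 <= t ->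
  is_nuclear_norm (f_t t) (Rpower (1 + t) (3 / 2) / sqrt t).
Proof.
  intros Ht; assert (Ht0 : 0 < t) by lra.
  set (r := sqrt (1 + t)); set (q := sqrt t).
  assert (Hr : 0 < r) by (apply sqrt_lt_R0; lra).
  assert (Hq : 0 < q) by (apply sqrt_lt_R0; lra).
  assert (Hrr : r * r = 1 + t) by (apply sqrt_sqrt; lra).
  assert (Hqq : q * q = t) by (apply sqrt_sqrt; lra).
  rewrite Rpower_3_2 by lra; fold r q; rewrite <- Hrr.
  set (c := / r); set (y := q / r); set (lam := r * r * r / (2 * q)).
  assert (Hcy : c * c + y * y = 1).
  { unfold c, y; replace (/ r * / r + q / r * (q / r)) with ((1 + q * q) / (r * r)) by (field; lra).
    rewrite Hqq, Hrr; field; lra. }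
  assert (Hyy : y * y = t * (c * c)).
  { unfold c, y; replace (q / r * (q / r)) with (q * q / (r * r)) by (field; lra).
    rewrite Hqq; field; lra. }
  assert (Hlam : 2 * lam * (c * c) * y = 1) by (unfold lam, c, y; field; lra).
  assert (Hl : 0 <= lam) by (unfold lam; apply Rlt_le, Rdiv_lt_0_compat; nra).
  set (w1 := (c, y)); set (w2 := (- c, y)).
  assert (N1 : sqnorm2 w1 = 1) by (unfold sqnorm2, w1; simpl; lra).
  assert (N2 : sqnorm2 w2 = 1) by (unfold sqnorm2, w2; simpl; lra).
  set (s := 2 - / t).
  assert (Hs : -1 <= s <= 2)
    by (unfold s; pose proof (Rinv_0_lt_compat t Ht0);
        assert (t * / t = 1) by (field; lra); split; nra).
  apply (is_nuclear_norm_intro _ _ (sym3 lam w1 :: sym3 lam w2 :: nil) (f_t s) (2 * q / r)).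
  - repeat constructor; apply sym3_simple.
  - apply tensor_ext; intros [|] [|] [|];
      unfold tsum_list, f_t, tadd, tscale, tzero, sym3, simple3, vscale, comp, e1, e2, w1, w2;
      simpl; try nra.
    replace (lam * y * y * y + (lam * y * y * y + 0)) with (2 * lam * y * (y * y)) by ring.
    rewrite Hyy; replace (2 * lam * y * (t * (c * c))) with (t * (2 * lam * (c * c) * y)) by ring.
    rewrite Hlam; ring.
  - simpl; rewrite !tnorm_sym3 by auto; unfold lam; field; lra.
  - apply Rdiv_lt_0_compat; lra.
  - apply f_t_spectral_le_real; [apply Rlt_le, Rdiv_lt_0_compat; lra |].
    replace (2 * q / r * (2 * q / r)) with (4 * (q * q) / (r * r)) by (field; lra).
    rewrite Hqq, Hrr; replace (4 * t / (1 + t)) with (4 / (3 - s)) by (unfold s; field; lra).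
    apply slice_criterion_inner; auto.
  - rewrite tinner_f_t_f_t; apply Req_le.
    replace (2 * q / r * (r * r * r / q)) with (2 * (r * r)) by (field; lra).
    rewrite Hrr; unfold s; field; lra.
Qed.

Theorem mainTheorem19 (t : R) :
  ((2 <= t \/ t <= -1) -> is_spectral_norm (f_t t) (Rabs t)) /\
  ((-1 <= t <= 2) -> is_spectral_norm (f_t t) (2 / sqrt (3 - t))) /\
  (t <= 1/3 -> is_nuclear_norm (f_t t) (3 - t)) /\
  (1/3 <= t -> is_nuclear_norm (f_t t) (Rpower (1 + t) (3/2) / sqrt t)).
Proof.
  split; [apply spectral_norm_f_t_outer |].
  split; [apply spectral_norm_f_t_inner |].
  split; [apply nuclear_norm_f_t_low | apply nuclear_norm_f_t_high].
Qed.
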